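(* Let $Z=\mathrm{GF}(2)$ and let $K$ be an elementary abelian $2$-group, regarded as a vector space over $\mathrm{GF}(2)$ (written additively). Let $g:K^3\to\mathrm{GF}(2)$ be a trilinear form such that $g(x,x+y,y)=g(y,x+y,x)$ for all $x,y\in K$. Define $\theta:K^2\to\mathrm{GF}(2)$ by $\theta(x,y)=g(x,x+y,y)$, and let $Q=K\ltimes_\theta Z$ be the set $K\times Z$ with multiplication $(x,a)(y,b)=(x+y,\ a+b+\theta(x,y))$. Then $Q$ is a commutative A-loop of exponent $2$. Moreover, $(y,b)\in N_\mu(Q)$ if and only if $g(y,x,z)=g(x,z,y)$ for all $x,z\in K$.
   Context: A loop is a set with a binary operation and a neutral element in which all left and right translations are bijections. Its inner mapping group is generated by $L_{x,y}=L_{yx}^{-1}L_yL_x$, $R_{x,y}=R_{xy}^{-1}R_yR_x$, $T_x=L_x^{-1}R_x$; an A-loop is a loop whose inner mappings are all automorphisms. Exponent $2$ means $uu=1$ for all elements $u$. $N_\mu(Q)=\{y:(xy)z=x(yz)\ \forall x,z\}$ is the middle nucleus. *)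

From HB Require Import structures.
From mathcomp Require Import all_boot all_order all_algebra.
Set Implicit Arguments. Unset Strict Implicit. Unset Printing Implicit Defensive.
Import GRing.Theory.
Local Open Scope ring_scope.

Section Loops.
Variable T : Type.
Variables (op : T -> T -> T) (e : T).

Definition is_loop : Prop :=
  (forall x, op e x = x /\ op x e = x) /\
  (forall a, bijective (op a)) /\
  (forall a, bijective (fun x => op x a)).

(* ld x y = x\y (left division), rd y x = y/x (right division):
   the inverses of the left translations L_x and right translations R_x. *)
Definition divisions (ld rd : T -> T -> T) : Prop :=
  forall x y, ld x (op x y) = y /\ op x (ld x y) = y /\
              rd (op y x) x = y /\ op (rd y x) x = y.

(* Inner mapping group: generated by
     L_{x,y} = L_{yx}^{-1} L_y L_x : z |-> (yx) \ (y(xz)),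
     R_{x,y} = R_{xy}^{-1} R_y R_x : z |-> ((zx)y) / (xy),
     T_x     = L_x^{-1} R_x        : z |-> x \ (zx),
   closed under identity, composition and inverses. *)
Inductive inner_map (ld rd : T -> T -> T) : (T -> T) -> Prop :=
  | inner_L x y : inner_map ld rd (fun z => ld (op y x) (op y (op x z)))
  | inner_R x y : inner_map ld rd (fun z => rd (op (op z x) y) (op x y))
  | inner_T x : inner_map ld rd (fun z => ld x (op z x))
  | inner_id : inner_map ld rd id
  | inner_comp f h : inner_map ld rd f -> inner_map ld rd h ->
                     inner_map ld rd (f \o h)
  | inner_inv f h : inner_map ld rd f -> cancel f h -> cancel h f ->
                    inner_map ld rd h.

Definition loop_automorphism (f : T -> T) : Prop :=
  bijective f /\ forall x y, f (op x y) = op (f x) (f y).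

Definition A_loop : Prop :=
  is_loop /\
  forall ld rd, divisions ld rd ->
    forall f, inner_map ld rd f -> loop_automorphism f.

Definition loop_commutative : Prop := forall x y, op x y = op y x.

Definition exponent2 : Prop := forall u, op u u = e.

Definition middle_nucleus (y : T) : Prop :=
  forall x z, op (op x y) z = op x (op y z).

End Loops.

Definition trilinear (K : lmodType 'F_2) (g : K -> K -> K -> 'F_2) : Prop :=
  (forall (a : 'F_2) x x' y z, g (a *: x + x') y z = a * g x y z + g x' y z) /\
  (forall (a : 'F_2) x y y' z, g x (a *: y + y') z = a * g x y z + g x y' z) /\
  (forall (a : 'F_2) x y z z', g x y (a *: z + z') = a * g x y z + g x y z').

Definition semidirect_op (K : lmodType 'F_2) (theta : K -> K -> 'F_2)
  (p q : K * 'F_2) : K * 'F_2 :=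
  (p.1 + q.1, p.2 + q.2 + theta p.1 q.1).

From Stdlib Require Import Btauto.
From HB Require Import structures.
From mathcomp Require Import all_boot all_order all_algebra.
Import GRing.Theory.
Set Implicit Arguments. Unset Strict Implicit. Unset Printing Implicit Defensive.
Local Open Scope ring_scope.

(* The loop Q = K x_theta GF(2) is a central extension of K by
   Z = GF(2): its product only adds theta(x,y) to the sum of the second
   coordinates.  Consequently
   - the failure of associativity is measured by the scalar
       delta(x,y,z) = theta(x,y) + theta(x+y,z) + theta(y,z) + theta(x,y+z),
     i.e. ((p q) r) = (p (q r)) translated by the central element (0,delta);
   - (y,b) is in the middle nucleus iff delta(x,y,z) = 0 for all x, z;
   - L_{x,y} and R_{x,y} are the "shears" (z,c) |-> (z, c + l z) with
     l = delta(y,x,-) resp. l = delta(-,x,y), T_x is the identity when theta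
     is symmetric, and shears with additive l are automorphisms closed under
     composition and inversion.  For
   theta(x,y) = g(x,x+y,y) with g trilinear and g(x,x+y,y) = g(y,x+y,x) one
   computes delta(x,y,z) = g(y,x,z) + g(x,z,y), which is additive in every
   argument; the proposition then follows by combining the two parts. *)

(* Arithmetic in GF(2): identities are decided by transporting them to bool,
   where addition becomes exclusive or, and calling btauto. *)
Definition bool_of_F2 (a : 'F_2) : bool := val a == 1%N.

Lemma F2_cases (a : 'F_2) : a = 0 \/ a = 1.
Proof. by case: a => [[|[|n]] a_lt]; [left | right | by []]; apply: val_inj. Qed.

Lemma bool_of_F2D (a b : 'F_2) : bool_of_F2 (a + b) = xorb (bool_of_F2 a) (bool_of_F2 b).
Proof. by case: (F2_cases a) => ->; case: (F2_cases b) => ->. Qed.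

Lemma bool_of_F2_inj : injective bool_of_F2.
Proof. by move=> a b; case: (F2_cases a) => ->; case: (F2_cases b) => ->. Qed.

Ltac F2_identity :=
  apply: bool_of_F2_inj; rewrite !bool_of_F2D;
  repeat match goal with |- context [bool_of_F2 ?t] =>
    let b := fresh "b" in move: (bool_of_F2 t) => b end;
  btauto.

Lemma F2_char2 : 2 \in [pchar 'F_2].
Proof. exact: pchar_Fp. Qed.

Lemma addvv (K : lmodType 'F_2) (x : K) : x + x = 0.
Proof. by rewrite -[x]scale1r -scalerDl (addrr_pchar2 F2_char2) scale0r. Qed.

Definition additive_form (K : lmodType 'F_2) (l : K -> 'F_2) : Prop :=
  forall u v, l (u + v) = l u + l v.

Lemma additive_form0 (K : lmodType 'F_2) : additive_form (fun _ : K => 0 : 'F_2).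
Proof. by move=> u v; rewrite addr0. Qed.

Lemma additive_formD (K : lmodType 'F_2) (l l' : K -> 'F_2) :
  additive_form l -> additive_form l' -> additive_form (fun w => l w + l' w).
Proof. by move=> l_add l'_add u v; rewrite l_add l'_add; F2_identity. Qed.

Section CentralExtension.
Variables (K : lmodType 'F_2) (theta : K -> K -> 'F_2).
Local Notation op := (semidirect_op theta).

Definition bump (c : 'F_2) (p : K * 'F_2) : K * 'F_2 := (p.1, p.2 + c).

Definition shear (l : K -> 'F_2) (p : K * 'F_2) : K * 'F_2 := bump (l p.1) p.

Definition assoc_defect (x y z : K) : 'F_2 :=
  theta x y + theta (x + y) z + theta y z + theta x (y + z).

Lemma op_bumpl c p q : op (bump c p) q = bump c (op p q).
Proof. by rewrite /semidirect_op /bump /=; congr pair; F2_identity. Qed.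

Lemma op_bumpr c p q : op p (bump c q) = bump c (op p q).
Proof. by rewrite /semidirect_op /bump /=; congr pair; F2_identity. Qed.

Lemma bumpK c : involutive (bump c).
Proof. by move=> [x a]; rewrite /bump /= -addrA (addrr_pchar2 F2_char2) addr0. Qed.

Lemma bump_fixed c p : bump c p = p -> c = 0.
Proof. by case: p => x a /(congr1 snd) /=; rewrite -[RHS]addr0 => /addrI. Qed.

Lemma op_assoc_defect p q r :
  op (op p q) r = bump (assoc_defect p.1 q.1 r.1) (op p (op q r)).
Proof.
rewrite /semidirect_op /bump /assoc_defect /=.
by congr pair; [rewrite addrA | F2_identity].
Qed.

Lemma middle_nucleusP y b :
  middle_nucleus op (y, b) <-> (forall x z, assoc_defect x y z = 0).
Proof.
split=> [nuc x z | defect0 p r].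
- by have := nuc (x, 0) (z, 0); rewrite op_assoc_defect => /bump_fixed.
- by rewrite op_assoc_defect defect0 /bump addr0; case: (op _ _).
Qed.

Lemma shear_involutive l : involutive (shear l).
Proof. by move=> p; rewrite /shear /= bumpK. Qed.

Lemma shear_automorphism l : additive_form l -> loop_automorphism op (shear l).
Proof.
move=> l_add; split; first exact: (inv_bij (shear_involutive l)).
move=> [x a] [y b]; rewrite /shear /bump /semidirect_op /= l_add.
by congr pair; F2_identity.
Qed.

Lemma shear0 p : shear (fun=> 0) p = p.
Proof. by case: p => x a; rewrite /shear /bump addr0. Qed.

Lemma shear_comp l l' : shear l \o shear l' =1 shear (fun w => l' w + l w).
Proof. by move=> [x a]; rewrite /shear /bump /= addrA. Qed.

Hypothesis theta_sym : forall x y, theta x y = theta y x.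
Hypothesis theta_x0 : forall x, theta x 0 = 0.
Hypothesis theta_xx : forall x, theta x x = 0.

Lemma op_commutative : loop_commutative op.
Proof.
move=> [x a] [y b]; rewrite /semidirect_op /= theta_sym.
by congr pair; [rewrite addrC | F2_identity].
Qed.

Lemma op_exponent2 : exponent2 op (0, 0).
Proof.
by move=> [x a]; rewrite /semidirect_op /= theta_xx addvv (addrr_pchar2 F2_char2) addr0.
Qed.

(* (0,0) is neutral and left translations are explicitly invertible;
   right translations are then bijective by commutativity. *)
Lemma op_is_loop : is_loop op (0, 0).
Proof.
have neutral_r p : op p (0, 0) = p.
  by case: p => x a; rewrite /semidirect_op /= theta_x0 !addr0.
have left_bij (p : K * 'F_2) : bijective (op p).
  case: p => x a; exists (fun q => (q.1 - x, q.2 - a - theta x (q.1 - x))).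
    move=> [y b]; rewrite /semidirect_op /= addrC addKr !(oppr_pchar2 F2_char2).
    by congr pair; F2_identity.
  move=> [y b]; rewrite /semidirect_op /= addrC subrK !(oppr_pchar2 F2_char2).
  by congr pair; F2_identity.
split; [|split] => [p | p | p].
- by rewrite op_commutative neutral_r.
- exact: left_bij.
- have [h hK Kh] := left_bij p.
  by exists h => q; rewrite op_commutative ?hK ?Kh.
Qed.

Hypothesis defect_additive_r : forall x y, additive_form (assoc_defect x y).
Hypothesis defect_additive_l :
  forall x y, additive_form (fun w => assoc_defect w x y).

Lemma inner_map_shear ld rd : divisions op ld rd ->
  forall f, inner_map op ld rd f -> exists2 l, additive_form l & f =1 shear l.
Proof.
move=> div f; elim=> {f}.
-
  move=> x y; exists (assoc_defect y.1 x.1) => // z.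
  have -> : op y (op x z) = op (op y x) (shear (assoc_defect y.1 x.1) z).
    by rewrite /shear op_bumpr op_assoc_defect bumpK.
  exact: (div _ _).1.
-
  move=> x y; exists (fun w => assoc_defect w x.1 y.1) => // z.
  by rewrite op_assoc_defect -op_bumpl (div _ _).2.2.1.
- (* T_x is the identity, as Q is commutative *)
  move=> x; exists (fun=> 0) => [|z]; first exact: additive_form0.
  by rewrite op_commutative (div _ _).1 shear0.
- by exists (fun=> 0) => [|z]; [apply: additive_form0 | rewrite shear0].
- move=> f h _ [lf lf_add f_shear] _ [lh lh_add h_shear].
  exists (fun w => lh w + lf w); first exact: additive_formD.
  by move=> z; rewrite /= f_shear h_shear; apply: shear_comp.
- (* an inverse of a shear is the same (involutive) shear *)
  move=> f h _ [l l_add f_shear] _ hK; exists l => // z.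
  by rewrite -[h z](shear_involutive l) -[shear l (h z)]f_shear hK.
Qed.

Lemma op_A_loop : A_loop op (0, 0).
Proof.
split=> [|ld rd div f /(inner_map_shear div) [l l_add f_shear]].
  exact: op_is_loop.
have [f_bij f_morph] := shear_automorphism l_add.
split; first exact: eq_bij f_bij _ (fsym f_shear).
by move=> p q; rewrite !f_shear; apply: f_morph.
Qed.

End CentralExtension.

Section TrilinearCocycle.
Variables (K : lmodType 'F_2) (g : K -> K -> K -> 'F_2).
Hypothesis g_trilinear : trilinear g.
Hypothesis g_sym : forall x y : K, g x (x + y) y = g y (x + y) x.

Definition tri_theta (x y : K) : 'F_2 := g x (x + y) y.

Lemma gDl x x' y z : g (x + x') y z = g x y z + g x' y z.
Proof. by have := g_trilinear.1 1 x x' y z; rewrite scale1r mul1r. Qed.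

Lemma gDm x y y' z : g x (y + y') z = g x y z + g x y' z.
Proof. by have := g_trilinear.2.1 1 x y y' z; rewrite scale1r mul1r. Qed.

Lemma gDr x y z z' : g x y (z + z') = g x y z + g x y z'.
Proof. by have := g_trilinear.2.2 1 x y z z'; rewrite scale1r mul1r. Qed.

Lemma gm0 x z : g x 0 z = 0.
Proof. by have := gDm x 0 0 z; rewrite addr0 (addrr_pchar2 F2_char2). Qed.

Lemma gr0 x y : g x y 0 = 0.
Proof. by have := gDr x y 0 0; rewrite addr0 (addrr_pchar2 F2_char2). Qed.

Lemma tri_theta_sym x y : tri_theta x y = tri_theta y x.
Proof. by rewrite /tri_theta g_sym addrC. Qed.

Lemma tri_theta_x0 x : tri_theta x 0 = 0.
Proof. exact: gr0. Qed.

Lemma tri_theta_xx x : tri_theta x x = 0.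
Proof. by rewrite /tri_theta addvv gm0. Qed.

Lemma tri_assoc_defect x y z :
  assoc_defect tri_theta x y z = g y x z + g x z y.
Proof. by rewrite /assoc_defect /tri_theta !(gDl, gDm, gDr); F2_identity. Qed.

Lemma tri_defect_additive_r x y : additive_form (assoc_defect tri_theta x y).
Proof. by move=> u v; rewrite !tri_assoc_defect !(gDl, gDm, gDr); F2_identity. Qed.

Lemma tri_defect_additive_l x y :
  additive_form (fun w => assoc_defect tri_theta w x y).
Proof. by move=> u v; rewrite !tri_assoc_defect !(gDl, gDm, gDr); F2_identity. Qed.

Lemma tri_defect_eq0 x y z :
  (assoc_defect tri_theta x y z = 0) <-> (g y x z = g x z y).
Proof.
rewrite tri_assoc_defect; split=> [/eqP | ->]; last exact: (addrr_pchar2 F2_char2).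
by rewrite addr_eq0 (oppr_pchar2 F2_char2) => /eqP.
Qed.

End TrilinearCocycle.

Theorem proposition4p3 (K : lmodType 'F_2) (g : K -> K -> K -> 'F_2)
  (g_trilinear : trilinear g)
  (g_sym : forall x y : K, g x (x + y) y = g y (x + y) x) :
  let theta := fun x y : K => g x (x + y) y in
  let Qop := semidirect_op theta in
  [/\ A_loop Qop (0, 0), loop_commutative Qop, exponent2 Qop (0, 0) &
      forall (y : K) (b : 'F_2),
        middle_nucleus Qop (y, b) <-> (forall x z : K, g y x z = g x z y)].
Proof.
move=> theta Qop.
have theta_sym := tri_theta_sym g_sym.
split.
- exact: op_A_loop theta_sym (tri_theta_x0 g_trilinear)
    (tri_defect_additive_r g_trilinear) (tri_defect_additive_l g_trilinear).
- exact: op_commutative theta_sym.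
- exact: op_exponent2 (tri_theta_xx g_trilinear).
- move=> y b; rewrite (middle_nucleusP theta y b).
  by split=> nucleus_cond x z; apply/(tri_defect_eq0 g_trilinear); apply: nucleus_cond.
Qed.
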